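(* Let $n\in\mathbb{N}$ and let $\sigma$ be a probability distribution on $[n]$ for which there exists $i\in[n-1]$ with $\sigma_{\le i}\le\frac in$. Let $(t_1^{(s)},\dots,t_n^{(s)})$ be the state of the exponential-jump process with choice distribution $\sigma$ after $s$ steps, started from any fixed initial state. Then $\mathbb{E}[t_n^{(s)}-t_1^{(s)}]\to\infty$ as $s\to\infty$.
   Context: $\sigma_{\le i}=\Pr_{i^*\sim\sigma}[i^*\le i]$. The exponential-jump process: the state consists of $n$ tokens at real positions $t_1<\dots<t_n$. In each step, independently sample $i^*\sim\sigma$ and $X\sim\mathrm{Exp}(1)$ (exponential with rate $1$), move the $i^*$-th token from the left a distance $X$ to the right, and re-sort the positions: $(t_1,\dots,t_n)\mapsto\mathrm{sort}(t_1,\dots,t_{i^*}+X,\dots,t_n)$. *)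

From HB Require Import structures.
From mathcomp Require Import all_boot all_order all_algebra.
From mathcomp Require Import all_classical all_reals all_analysis.
Set Implicit Arguments. Unset Strict Implicit. Unset Printing Implicit Defensive.
Import Order.TTheory GRing.Theory Num.Theory.
Import numFieldNormedType.Exports.
Local Open Scope classical_set_scope.
Local Open Scope ring_scope.

(* A state of the process: the (sorted) list of token positions t_1 < ... < t_n,
   stored 0-indexed: token k+1 of the paper is [nth 0 t k]. *)

(* sigma_{<= i} = Pr[i* <= i], with i* in [n] = {1..n}; 0-indexed: j < i. *)
Definition sigma_le {R : realType} (n : nat) (sigma : 'I_n -> R) (i : nat) : R :=
  \sum_(j < n | (j < i)%N) sigma j.

Definition jump {R : realType} (t : seq R) (j : nat) (x : R) : seq R :=
  sort <=%R (set_nth 0 t j (nth 0 t j + x)).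

(* Transition operator of the exponential-jump process on nonnegative
   extended-real observables:
   (P f)(t) = E[f(next state) | current state t]
            = sum_j sigma_j * int_0^oo e^{-x} f(jump t j x) dx. *)
Definition ejump_op {R : realType} (n : nat) (sigma : 'I_n -> R)
  (f : seq R -> \bar R) (t : seq R) : \bar R :=
  (\sum_(j < n) (sigma j)%:E *
     \int[@lebesgue_measure R]_(x in `[0%R, +oo[%classic)
        ((expR (- x))%:E * f (jump t j x)))%E.

Definition gap {R : realType} (n : nat) (t : seq R) : \bar R :=
  (nth 0 t n.-1 - nth 0 t 0)%:E.

Definition expected_gap {R : realType} (n : nat) (sigma : 'I_n -> R)
  (t0 : seq R) (s : nat) : \bar R :=
  iter s (ejump_op sigma) (gap n) t0.

From HB Require Import structures.
From mathcomp Require Import all_boot all_order all_algebra.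
From mathcomp Require Import all_classical all_reals all_analysis.
From mathcomp Require Import ring lra zify measurable_realfun.
Set Implicit Arguments. Unset Strict Implicit. Unset Printing Implicit Defensive.
Import Order.TTheory GRing.Theory Num.Theory.
Import numFieldNormedType.Exports.
Local Open Scope classical_set_scope.
Local Open Scope ring_scope.

(* Fix i with sigma_{<= i} <= i/n and the potential
   V(t) = mean(t_{i+1}, ..., t_n) - mean(t_1, ..., t_i), which lies in [0, t_n - t_1].
   Moving a right token by x raises V by x/(n-i); moving a left token lowers V
   by at most x/i, and by at most x/i - (x - nV)^+ n/(i(n-i)) because the sum of
   the i smallest positions cannot grow by more than t_{i+1} - t_j <= nV.
   Integrating against e^-x and averaging with sigma_{<= i} <= i/n gives
   E[V'] >= phi(V) := V + e^(-nV)/n.  As phi is nondecreasing and convex, Jensen's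
   inequality yields E[t_n - t_1 after s steps] >= phi^s(V(t^(0))), and phi^s
   diverges since it gains at least e^(-nM)/n per step while below M. *)

Lemma sum_set_nth (V : zmodType) (s : seq V) (j m : nat) (y : V) : (j < m)%N ->
  \sum_(0 <= k < m) nth 0 (set_nth 0 s j y) k = \sum_(0 <= k < m) nth 0 s k + (y - nth 0 s j).
Proof.
move=> jm; rewrite !(bigD1_seq j) ?mem_index_iota ?iota_uniq //= nth_set_nth /= eqxx.
rewrite (eq_bigr (fun k => nth 0 s k)) => [|k /negbTE kj]; last by rewrite nth_set_nth /= kj.
by rewrite [RHS]addrC addrA subrK.
Qed.

Lemma count_iota_ltn (P : pred nat) (m n : nat) : (m <= n)%N ->
  count (fun k => P k && (k < m)%N) (index_iota 0 n) = count P (index_iota 0 m).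
Proof.
move=> mn; rewrite /index_iota !subn0 -(subnKC mn) iotaD count_cat add0n.
rewrite -[RHS]addn0; congr (_ + _).
  by apply: eq_in_count => k; rewrite mem_iota add0n => /andP[_ ->]; rewrite andbT.
rewrite (@eq_in_count _ _ pred0) ?count_pred0 // => k.
by rewrite mem_iota => /andP[mk _]; rewrite ltnNge mk andbF.
Qed.

Section SortedSums.
Variable R : realDomainType.

Lemma sorted_prefix_sum_le (u w : seq R) (P : pred nat) (i : nat) :
  sorted <=%R u -> perm_eq u w -> (i <= size u)%N ->
  count P (index_iota 0 (size w)) = i ->
  \sum_(0 <= k < i) nth 0 u k <= \sum_(0 <= k < size w | P k) nth 0 w k.
Proof.
move=> u_sorted uw i_le countP.
(* [i y - sum_z (y - z)^+] is at most the sum of any i entries, with equality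
   for the i smallest ones when y is the i-th smallest entry. *)
pose y := nth 0 u i.-1.
pose G (v : seq R) := i%:R * y - \sum_(z <- v) Num.max (y - z) 0.
have u_mono k l : (k <= l < size u)%N -> nth 0 u k <= nth 0 u l.
  move=> /andP[kl lu]; apply: (sorted_leq_nth le_trans lexx) => //.
  by rewrite inE (leq_ltn_trans kl lu).
have Gu : G u = \sum_(0 <= k < i) nth 0 u k.
  have low : \sum_(0 <= k < i) Num.max (y - nth 0 u k) 0
      = \sum_(0 <= k < i) (y - nth 0 u k).
    apply: eq_big_nat => k /andP[_ ki]; apply/max_l; rewrite subr_ge0 u_mono //.
    by rewrite -ltnS prednK ?ki ?(leq_ltn_trans _ ki) //= (leq_trans ki i_le).
  have high : \sum_(i <= k < size u) Num.max (y - nth 0 u k) 0 = 0.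
    apply: big1_seq => k /andP[_]; rewrite mem_index_iota => /andP[ik ku].
    by apply/max_r; rewrite subr_le0 u_mono // ku (leq_trans (leq_pred i) ik).
  rewrite /G (big_nth 0) (@big_cat_nat _ _ _ i) //= low high addr0.
  by rewrite sumrB sumr_const_nat subn0 -mulr_natl; ring.
have Gw : G w <= \sum_(0 <= k < size w | P k) nth 0 w k.
  rewrite /G (big_nth 0) (bigID P) /=.
  have -> : i%:R = \sum_(0 <= k < size w | P k) (1 : R).
    by rewrite -countP -sum1_count natr_sum.
  have dropped : 0 <= \sum_(0 <= k < size w | ~~ P k) Num.max (y - nth 0 w k) 0.
    by apply: sumr_ge0 => k _; rewrite le_max lexx orbT.
  have kept : \sum_(0 <= k < size w | P k) (y - nth 0 w k)
      <= \sum_(0 <= k < size w | P k) Num.max (y - nth 0 w k) 0.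
    by apply: ler_sum => k _; rewrite le_max lexx.
  have kept_sum : \sum_(0 <= k < size w | P k) (y - nth 0 w k)
      = (\sum_(0 <= k < size w | P k) 1) * y - \sum_(0 <= k < size w | P k) nth 0 w k.
    by rewrite sumrB mulr_suml; congr (_ - _); apply: eq_bigr => k _; rewrite mul1r.
  lra.
have Guw : G u = G w by rewrite /G (perm_big _ uw).
by rewrite -Gu Guw.
Qed.

Lemma sum_sorted_ge (u : seq R) (a b : nat) : sorted <=%R u -> (b <= size u)%N ->
  (b - a)%:R * nth 0 u a <= \sum_(a <= k < b) nth 0 u k.
Proof.
move=> u_sorted bu; rewrite mulr_natl -sumr_const_nat.
apply: ler_sum_nat => k /andP[ak kb]; apply: (sorted_leq_nth le_trans lexx) => //.
  by rewrite inE (leq_ltn_trans ak) // (leq_trans kb bu).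
by rewrite inE (leq_trans kb bu).
Qed.

Lemma sum_sorted_le (u : seq R) (a b : nat) : sorted <=%R u -> (b <= size u)%N ->
  \sum_(a <= k < b) nth 0 u k <= (b - a)%:R * nth 0 u b.-1.
Proof.
move=> u_sorted bu; rewrite mulr_natl -sumr_const_nat.
apply: ler_sum_nat => k /andP[ak kb].
have kb' : (k <= b.-1)%N by rewrite -ltnS prednK // (leq_ltn_trans _ kb).
apply: (sorted_leq_nth le_trans lexx) => //; rewrite inE; first exact: leq_trans kb bu.
by rewrite prednK ?(leq_ltn_trans _ kb) // (leq_trans kb bu).
Qed.

End SortedSums.

Section Potential.
Variables (R : realFieldType) (n i : nat).
Hypotheses (i_gt0 : (0 < i)%N) (i_lt_n : (i < n)%N).

Definition potential (u : seq R) : R :=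
  (\sum_(i <= k < n) nth 0 u k) / (n - i)%:R - (\sum_(0 <= k < i) nth 0 u k) / i%:R.

Let i_le_n : (i <= n)%N. Proof. exact: ltnW. Qed.
Let i_gt0R : 0 < i%:R :> R. Proof. by rewrite ltr0n. Qed.
Let ni_gt0R : 0 < (n - i)%:R :> R. Proof. by rewrite ltr0n subn_gt0. Qed.

Definition gain_slope (j : nat) : R := if (j < i)%N then - i%:R^-1 else (n - i)%:R^-1.
Definition gain_ramp (j : nat) : R :=
  if (j < i)%N then n%:R / (i%:R * (n - i)%:R) else 0.

Lemma potentialE (u : seq R) : potential u =
  (\sum_(0 <= k < n) nth 0 u k) / (n - i)%:R
  - (\sum_(0 <= k < i) nth 0 u k) * (n%:R / (i%:R * (n - i)%:R)).
Proof.
have -> : n%:R = (n - i)%:R + i%:R :> R by rewrite -natrD subnK.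
rewrite /potential (@big_cat_nat _ _ _ i 0 n) //=.
by field; rewrite !gt_eqF.
Qed.

Lemma mean_gain_ge (sigma : 'I_n -> R) (E : R) :
  (forall j, 0 <= sigma j) -> \sum_(j < n) sigma j = 1 ->
  \sum_(j < n | (j < i)%N) sigma j <= i%:R / n%:R -> 0 <= E <= 1 ->
  E / n%:R <= \sum_(j < n) sigma j * (gain_slope j + gain_ramp j * E).
Proof.
move=> sigma_ge0 sigma_sum1 sigma_le_i /andP[E_ge0 E_le1].
set s := \sum_(j < n | (j < i)%N) sigma j in sigma_le_i *.
set m : R := (n - i)%:R; set c : R := n%:R / (i%:R * m).
have n_split : n%:R = i%:R + m :> R by rewrite /m -natrD subnKC.
have c_gt0 : 0 < c by rewrite /c n_split divr_gt0 ?mulr_gt0 ?addr_gt0.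
have -> : \sum_(j < n) sigma j * (gain_slope j + gain_ramp j * E)
    = s * (- i%:R^-1 + c * E) + (1 - s) / m.
  rewrite (bigID (fun j : 'I_n => (j < i)%N)) /=; congr (_ + _).
    by rewrite mulr_suml; apply: eq_bigr => j ji; rewrite /gain_slope /gain_ramp ji.
  have -> : 1 - s = \sum_(j < n | ~~ (j < i)%N) sigma j.
    by rewrite -sigma_sum1 (bigID (fun j : 'I_n => (j < i)%N)) /= addrC addrK.
  rewrite mulr_suml; apply: eq_bigr => j /negbTE ji.
  by rewrite /gain_slope /gain_ramp ji mul0r addr0.
have c_split : c = i%:R^-1 + m^-1 by rewrite /c n_split; field; rewrite !gt_eqF.
have shrink : s * (c * (1 - E)) <= i%:R / n%:R * (c * (1 - E)).
  by rewrite ler_wpM2r // mulr_ge0 ?subr_ge0 // ltW.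
have weight : i%:R / n%:R * c = m^-1.
  by rewrite /c n_split; field; rewrite !gt_eqF ?addr_gt0.
have E_mn : E / n%:R <= E / m.
  by rewrite n_split ler_wpM2l // lef_pV2 ?posrE ?addr_gt0 // lerDr ltW.
move: shrink; rewrite [in X in _ <= X]mulrA weight c_split; lra.
Qed.

Variable t : seq R.
Hypotheses (t_size : size t = n) (t_sorted : sorted <=%R t).

Let t_len : (n <= size t)%N. Proof. by rewrite t_size. Qed.

Let t_mono k l : (k <= l)%N -> (l < n)%N -> nth 0 t k <= nth 0 t l.
Proof.
move=> kl ln; apply: (sorted_leq_nth le_trans lexx) => //; rewrite inE t_size //.
exact: leq_ltn_trans ln.
Qed.

Lemma potential_le_gap : potential t <= nth 0 t n.-1 - nth 0 t 0.
Proof.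
have top : (\sum_(i <= k < n) nth 0 t k) / (n - i)%:R <= nth 0 t n.-1.
  by rewrite ler_pdivrMr // mulrC sum_sorted_le.
have bottom : nth 0 t 0 <= (\sum_(0 <= k < i) nth 0 t k) / i%:R.
  rewrite ler_pdivlMr // mulrC -[i in i%:R](subn0 i) sum_sorted_ge //.
  by rewrite (leq_trans i_le_n).
rewrite /potential; lra.
Qed.

Lemma potential_ge_spread (j : nat) : (j < i)%N ->
  nth 0 t i - nth 0 t j <= i%:R * potential t.
Proof.
move=> ji.
have top : nth 0 t i <= (\sum_(i <= k < n) nth 0 t k) / (n - i)%:R.
  by rewrite ler_pdivlMr // mulrC sum_sorted_ge.
have bottom : \sum_(0 <= k < i) nth 0 t k <= i%:R * nth 0 t i - (nth 0 t i - nth 0 t j).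
  have gaps : nth 0 t i - nth 0 t j <= \sum_(0 <= k < i) (nth 0 t i - nth 0 t k).
    rewrite (bigD1_seq j) ?mem_index_iota ?iota_uniq //= lerDl.
    rewrite big_seq_cond; apply: sumr_ge0 => k /andP[]; rewrite mem_index_iota.
    move=> /andP[_ ki] _; rewrite subr_ge0.
    exact: t_mono (ltnW ki) i_lt_n.
  by move: gaps; rewrite sumrB sumr_const_nat subn0 -mulr_natl; lra.
rewrite /potential mulrBr [i%:R * (_ / i%:R)]mulrC divfK ?gt_eqF //.
have : i%:R * nth 0 t i <= i%:R * ((\sum_(i <= k < n) nth 0 t k) / (n - i)%:R).
  by rewrite ler_pM2l.
lra.
Qed.

Lemma potential_ge0 : 0 <= potential t.
Proof.
have spread := potential_ge_spread i_gt0.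
have t0i : nth 0 t 0 <= nth 0 t i by exact: t_mono.
by rewrite -(pmulr_rge0 _ i_gt0R); lra.
Qed.

End Potential.
Arguments gain_slope {R} n i j.
Arguments gain_ramp {R} n i j.

Lemma size_jump (R : realType) (t : seq R) (j : nat) (x : R) :
  (j < size t)%N -> size (jump t j x) = size t.
Proof. by move=> jt; rewrite size_sort size_set_nth; apply/maxn_idPr. Qed.

Lemma sorted_jump (R : realType) (t : seq R) (j : nat) (x : R) : sorted <=%R (jump t j x).
Proof. exact/sort_sorted/le_total. Qed.

Section Jump.
Variables (R : realType) (n i : nat).
Hypotheses (i_gt0 : (0 < i)%N) (i_lt_n : (i < n)%N).
Variable t : seq R.
Hypotheses (t_size : size t = n) (t_sorted : sorted <=%R t).
Variables (j : nat) (x : R).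
Hypothesis j_lt_n : (j < n)%N.

Let i_le_n : (i <= n)%N. Proof. exact: ltnW. Qed.
Let w := set_nth 0 t j (nth 0 t j + x).
Let w_size : size w = n. Proof. by rewrite size_set_nth t_size; apply/maxn_idPr. Qed.
Let jump_perm : perm_eq (jump t j x) w. Proof. by rewrite perm_sort. Qed.
Let nth_w k : k != j -> nth 0 w k = nth 0 t k.
Proof. by move=> /negbTE kj; rewrite nth_set_nth /= kj. Qed.
Let jump_size : size (jump t j x) = n. Proof. by rewrite size_jump t_size. Qed.

Lemma sum_jump :
  \sum_(0 <= k < n) nth 0 (jump t j x) k = \sum_(0 <= k < n) nth 0 t k + x.
Proof.
have sum_seq (u : seq R) : size u = n -> \sum_(0 <= k < n) nth 0 u k = \sum_(z <- u) z.
  by move=> un; rewrite [RHS](big_nth 0) un.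
rewrite sum_seq // (perm_big _ jump_perm) -sum_seq //.
by rewrite sum_set_nth // addrAC subrr add0r.
Qed.

Let bottom_le (P : pred nat) : count P (index_iota 0 n) = i ->
  \sum_(0 <= k < i) nth 0 (jump t j x) k <= \sum_(0 <= k < n | P k) nth 0 w k.
Proof.
move=> countP; rewrite -w_size; apply: sorted_prefix_sum_le => //.
- exact: sorted_jump.
- by rewrite jump_size.
- by rewrite w_size.
Qed.

Lemma bottom_sum_jump_le : \sum_(0 <= k < i) nth 0 (jump t j x) k
  <= \sum_(0 <= k < i) nth 0 t k + (if (j < i)%N then x else 0).
Proof.
have count_i : count (fun k => (k < i)%N) (index_iota 0 n) = i.
  by have := count_iota_ltn predT i_le_n; rewrite count_predT size_iota subn0.
apply: le_trans (bottom_le count_i) _.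
have -> : \sum_(0 <= k < n | (k < i)%N) nth 0 w k = \sum_(0 <= k < i) nth 0 w k.
  by rewrite (big_nat_widen _ _ _ _ _ i_le_n).
case: ltnP => ji; first by rewrite sum_set_nth // addrAC subrr add0r.
suff -> : \sum_(0 <= k < i) nth 0 w k = \sum_(0 <= k < i) nth 0 t k by rewrite addr0.
by apply: eq_big_nat => k /andP[_ ki]; rewrite nth_w // neq_ltn (leq_trans ki ji).
Qed.

Lemma bottom_sum_jump_le_spread : (j < i)%N -> \sum_(0 <= k < i) nth 0 (jump t j x) k
  <= \sum_(0 <= k < i) nth 0 t k + nth 0 t i - nth 0 t j.
Proof.
move=> ji.
have count_spread : count (fun k => (k != j) && (k < i.+1)%N) (index_iota 0 n) = i.
  have := count_iota_ltn (predC1 j) i_lt_n => ->.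
  have := count_predC (pred1 j) (index_iota 0 i.+1).
  rewrite count_uniq_mem ?iota_uniq // mem_index_iota ltnS (ltnW ji).
  by rewrite size_iota subn0 add1n => -[].
apply: le_trans (bottom_le count_spread) _.
have -> : \sum_(0 <= k < n | (k != j) && (k < i.+1)%N) nth 0 w k
    = \sum_(0 <= k < i.+1 | k != j) nth 0 t k.
  by rewrite (big_nat_widen _ _ _ _ _ i_lt_n); apply: eq_bigr => k /andP[/nth_w].
have j_in : j \in index_iota 0 i.+1 by rewrite mem_index_iota ltnS (ltnW ji).
have : \sum_(0 <= k < i.+1) nth 0 t k = nth 0 t j + \sum_(0 <= k < i.+1 | k != j) nth 0 t k.
  by rewrite (bigD1_seq j j_in) ?iota_uniq.
by rewrite big_nat_recr //=; lra.
Qed.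

Lemma potential_jump_ge :
  potential n i t + (gain_slope n i j * x
                     + gain_ramp n i j * Num.max (x - n%:R * potential n i t) 0)
  <= potential n i (jump t j x).
Proof.
have v_ge0 := potential_ge0 i_gt0 i_lt_n t_size t_sorted.
have spread := potential_ge_spread i_gt0 i_lt_n t_size t_sorted.
have vE := potentialE i_gt0 i_lt_n t.
rewrite [potential _ _ (jump _ _ _)]potentialE // sum_jump.
have jump_le := bottom_sum_jump_le; have jump_le_spread := bottom_sum_jump_le_spread.
set v := potential n i t in v_ge0 spread vE jump_le jump_le_spread *.
set A := \sum_(0 <= k < i) nth 0 t k in vE jump_le jump_le_spread *.
set A' := \sum_(0 <= k < i) nth 0 (jump t j x) k in jump_le jump_le_spread *.
set S := \sum_(0 <= k < n) nth 0 t k in vE *.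
set m : R := (n - i)%:R in vE *; set c : R := n%:R / (i%:R * m) in vE *.
have i_gt0R : 0 < i%:R :> R by rewrite ltr0n.
have m_gt0 : 0 < m by rewrite ltr0n subn_gt0.
have c_gt0 : 0 < c by rewrite divr_gt0 ?mulr_gt0 // ltr0n (ltn_trans i_gt0).
have mean_xE : (S + x) / m = S / m + x / m by rewrite mulrDl.
rewrite /gain_slope /gain_ramp -/m -/c; case: ltnP => ji.
- have gain : A' - A <= x - Num.max (x - n%:R * v) 0.
    have [x_le|x_gt] := leP (x - n%:R * v) 0; first by move: jump_le; rewrite ji; lra.
    have : i%:R * v <= n%:R * v by rewrite ler_wpM2r // ler_nat ltnW.
    by move: (jump_le_spread ji) (spread j ji); lra.
  have c_split : x * c = x / i%:R + x / m.
    have n_split : n%:R = i%:R + m :> R by rewrite /m -natrD subnKC // ltnW.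
    by rewrite /c n_split; field; rewrite !gt_eqF.
  have := ler_wpM2l (ltW c_gt0) gain.
  rewrite mean_xE; lra.
- have : A' * c <= A * c.
    by rewrite ler_pM2r //; move: jump_le; rewrite ltnNge ji addr0.
  rewrite mean_xE mul0r addr0 mulrC; lra.
Qed.

End Jump.

Section NondecreasingConvex.
Variable R : realFieldType.
Implicit Types f h : R -> R.

(* Supporting lines of nonnegative slope everywhere: on [R] this characterizes
   the nondecreasing convex functions. *)
Definition nondecreasing_convex f :=
  forall a, exists2 g, 0 <= g & forall y, f a + g * (y - a) <= f y.

Lemma nondecreasing_convex_le f : nondecreasing_convex f -> {homo f : x y / x <= y}.
Proof.
move=> f_cvx x y xy; have [g g0 fg] := f_cvx x.
by apply: le_trans (fg y); rewrite lerDl mulr_ge0 // subr_ge0.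
Qed.

Lemma nondecreasing_convex_comp f h :
  nondecreasing_convex f -> nondecreasing_convex h -> nondecreasing_convex (h \o f).
Proof.
move=> f_cvx h_cvx a; have [gf gf0 fg] := f_cvx a; have [gh gh0 hg] := h_cvx (f a).
exists (gh * gf); first exact: mulr_ge0.
move=> y; apply: le_trans (hg (f y)); rewrite -mulrA lerD2l ler_wpM2l //.
by have := fg y; lra.
Qed.

Lemma nondecreasing_convex_iter f s :
  nondecreasing_convex f -> nondecreasing_convex (iter s f).
Proof.
move=> f_cvx; elim: s => [a|s IHs]; first by exists 1 => // y; rewrite /= mul1r addrC subrK.
exact: nondecreasing_convex_comp IHs f_cvx.
Qed.

End NondecreasingConvex.

Lemma iter_ge (R : numDomainType) (f : R -> R) (s : nat) (v : R) :
  (forall v, v <= f v) -> v <= iter s f v.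
Proof. by move=> f_ge; elim: s => //= s IHs; apply: le_trans IHs (f_ge _). Qed.

Lemma iter_cvgry (R : realType) (f : R -> R) (v0 : R) :
  (forall v, v <= f v) ->
  (forall M, exists2 c, 0 < c & forall v, v0 <= v <= M -> v + c <= f v) ->
  iter s f v0 @[s --> \oo] --> +oo.
Proof.
move=> f_ge f_step; apply/cvgryPge => M.
have [c c_gt0 f_stepM] := f_step M.
have iter_ge_min s : Num.min M (v0 + s%:R * c) <= iter s f v0.
  elim: s => [|s IHs]; first by rewrite mul0r addr0 ge_min lexx orbT.
  rewrite [iter _ _ _]/=; have [M_le|M_gt] := leP M (iter s f v0).
    by rewrite ge_min (le_trans M_le (f_ge _)).
  have : v0 + s%:R * c <= iter s f v0 by move: IHs; rewrite ge_min leNgt M_gt.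
  have := f_stepM (iter s f v0); rewrite iter_ge // (ltW M_gt) => /(_ isT).
  by rewrite ge_min -natr1 mulrDl mul1r; lra.
near=> s; apply: le_trans (iter_ge_min s); rewrite le_min lexx /= -lerBlDl.
by rewrite -ler_pdivrMr //; near: s; exact: nbhs_infty_ger.
Unshelve. all: by end_near.
Qed.

Section DriftMap.
Variables (R : realType) (n : nat).
Hypothesis n_gt0 : (0 < n)%N.

(* [v + e^(-n v) / n] lower-bounds the expected potential after one step; the
   clamp at 0 makes the map nondecreasing and convex on all of [R]. *)
Definition drift_map (v : R) : R :=
  Num.max v 0 + expR (- (n%:R * Num.max v 0)) / n%:R.

Let n_gt0R : 0 < n%:R :> R. Proof. by rewrite ltr0n. Qed.

Lemma drift_mapE v : 0 <= v -> drift_map v = v + expR (- (n%:R * v)) / n%:R.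
Proof. by move=> v0; rewrite /drift_map max_l. Qed.

Lemma drift_map_ge v : v <= drift_map v.
Proof.
have : v <= Num.max v 0 by rewrite le_max lexx.
have : 0 <= expR (- (n%:R * Num.max v 0)) / n%:R by rewrite divr_ge0 ?expR_ge0.
rewrite /drift_map; lra.
Qed.

Lemma nondecreasing_convex_drift_map : nondecreasing_convex drift_map.
Proof.
move=> a; pose b := Num.max a 0; pose e := expR (- (n%:R * b)).
have b_ge0 : 0 <= b by rewrite le_max lexx orbT.
have e_le1 : e <= 1 by rewrite /e expR_le1 oppr_le0 mulr_ge0 // ltW.
exists (1 - e); first by rewrite subr_ge0.
move=> y; pose u := Num.max y 0.
have tangent : 0 <= (expR (- (n%:R * u)) - e + n%:R * e * (u - b)) / n%:R.
  have : e * (1 - n%:R * (u - b)) <= expR (- (n%:R * u)).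
    have -> : - (n%:R * u) = - (n%:R * b) + - (n%:R * (u - b)) by ring.
    rewrite expRD ler_wpM2l ?expR_ge0 //; have := expR_ge1Dx (- (n%:R * (u - b))); lra.
  by move=> tangent0; apply: divr_ge0; [lra | exact: ltW].
have tangentE : (expR (- (n%:R * u)) - e + n%:R * e * (u - b)) / n%:R
    = expR (- (n%:R * u)) / n%:R - e / n%:R + e * (u - b).
  by field; rewrite gt_eqF.
have slope : (1 - e) * (y - a) <= (1 - e) * (u - b).
  have [a_ge0|a_lt0] := leP 0 a.
    rewrite /b max_l // ler_wpM2l ?subr_ge0 //; have : y <= u by rewrite le_max lexx.
    lra.
  have b0 : b = 0 by apply/max_r/ltW.
  by rewrite /e b0 mulr0 oppr0 expR0 subrr !mul0r.
rewrite /drift_map -/b -/u -/e; lra.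
Qed.

Lemma iter_drift_map_cvgry v0 : 0 <= v0 -> iter s drift_map v0 @[s --> \oo] --> +oo.
Proof.
move=> v0_ge0; apply: iter_cvgry; first exact: drift_map_ge.
move=> M; exists (expR (- (n%:R * M)) / n%:R); first by rewrite divr_gt0 ?expR_gt0.
move=> v /andP[v0v vM]; rewrite drift_mapE ?(le_trans v0_ge0) // lerD2l.
by rewrite ler_pM2r ?invr_gt0 // ler_expR lerN2 ler_pM2l.
Qed.

End DriftMap.

Section IntegralMonotone.
Context d (T : measurableType d) (R : realType) (mu : {measure set T -> \bar R}).
Local Open Scope ereal_scope.

(* The integral of a nonnegative function is a supremum over the simple
   functions below it, so monotonicity needs no measurability. *)
Lemma ge0_le_integral_nonmeasurable (D : set T) (f g : T -> \bar R) :
  (forall x, D x -> 0 <= f x) -> (forall x, D x -> f x <= g x) ->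
  \int[mu]_(x in D) f x <= \int[mu]_(x in D) g x.
Proof.
move=> f0 fg.
have g0 x : D x -> 0 <= g x by move=> Dx; exact: le_trans (f0 x Dx) (fg x Dx).
rewrite (@ge0_integralE _ _ _ mu D f f0) (@ge0_integralE _ _ _ mu D g g0).
apply: ereal_sup_le => _ [h /= hf <-]; exists h => //= x.
apply: le_trans (hf x) _; rewrite /patch; case: ifP => // /set_mem Dx; exact: fg.
Qed.

Lemma le_integral_EFin (D : set T) (g : T -> R) (G : T -> \bar R) :
  (forall x, D x -> 0 <= G x) -> (forall x, D x -> (g x)%:E <= G x) ->
  \int[mu]_(x in D) (g x)%:E <= \int[mu]_(x in D) G x.
Proof.
move=> G0 gG; apply: (@le_trans _ _ (\int[mu]_(x in D) (EFin \o g)^\+ x)).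
  rewrite [leLHS]integralE -[leRHS]sube0 leeB //.
  by apply: integral_ge0 => x _; exact: funeneg_ge0.
apply: ge0_le_integral_nonmeasurable => x Dx; first exact: funepos_ge0.
by rewrite funeposE ge_max gG ?G0.
Qed.

End IntegralMonotone.

Section ExpIntegrals.
Context {R : realType}.
Notation mu := (@lebesgue_measure R).

Lemma cvgr_mul_expRN : x * expR (- x) @[x --> +oo] --> (0 : R).
Proof.
have half_cvgy : (2^-1 * x : R) @[x --> +oo] --> +oo.
  by apply: gt0_cvgMry; [rewrite invr_gt0 | exact: cvg_id].
have expRN_half := cvg_comp _ _ half_cvgy (@cvgr_expR R).
apply: (@squeeze_cvgr _ _ _ _ (cst 0) (fun x => 2 * expR (- (2^-1 * x)))).
- near=> x.
  have x0 : 0 <= x by near: x; apply: nbhs_pinfty_ge; exact: num_real.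
  rewrite mulr_ge0 ?expR_ge0 //=.
  have x_le : x <= 2 * expR (2^-1 * x) by have := expR_ge1Dx (2^-1 * x); lra.
  apply: le_trans (ler_wpM2r (expR_ge0 (- x)) x_le) _.
  by rewrite -mulrA -expRD [_ + - x](_ : _ = - (2^-1 * x)) //; field.
- exact: cvg_cst.
- by rewrite -(mulr0 2); exact: (cvgMl_tmp (a := 2) expRN_half).
Unshelve. all: by end_near.
Qed.

Lemma integral_itvcy_affine_expRN (a c d : R) : 0 <= c -> 0 <= d ->
  (\int[mu]_(x in `[a, +oo[) ((c + d * (x - a)) * expR (- x))%:E
    = ((c + d) * expR (- a))%:E)%E.
Proof.
move=> c0 d0.
pose F x := - ((c + d + d * (x - a)) * expR (- x)).
have dF (x : R) : is_derive x (1:R) F ((c + d * (x - a)) * expR (- x)).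
  by apply: is_derive_eq; rewrite /GRing.scale /=; ring.
rewrite (@ge0_continuous_FTC2y R _ F a 0).
- by rewrite /F subrr mulr0 addr0 -EFinB sub0r opprK.
- by move=> x ax; rewrite mulr_ge0 ?expR_ge0 // addr_ge0 // mulr_ge0 // subr_ge0.
- apply: continuous_subspaceT => x.
  by apply/differentiable_continuous/derivable1_diffP; case: (dF x).
- have -> : F = fun x => - (d * (x * expR (- x)) + (c + d - d * a) * expR (- x)).
    by apply/funext => x; rewrite /F; ring.
  have -> : (0 : R) = - (d * 0 + (c + d - d * a) * 0) by ring.
  apply: cvgN; apply: cvgD.
  + exact: (cvgMl_tmp (a := d) cvgr_mul_expRN).
  + exact: (cvgMl_tmp (a := c + d - d * a) (@cvgr_expR R)).
- by move=> x _; case: (dF x).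
- apply: cvg_at_right_filter; apply/differentiable_continuous/derivable1_diffP.
  by case: (dF a).
- by move=> x _; rewrite derive1E; exact: derive_val.
Qed.

Local Notation D0 := (`[0%R, +oo[%classic : set R).

Lemma integral_expRN : (\int[mu]_(x in D0) (expR (- x))%:E = 1%:E)%E.
Proof.
have := @integral_itvcy_affine_expRN 0 1 0 ler01 (lexx 0).
rewrite addr0 mul1r oppr0 expR0 => <-.
by apply: eq_integral => x _; rewrite mul0r addr0 mul1r.
Qed.

Lemma integral_ramp_expRN (a : R) : 0 <= a ->
  (\int[mu]_(x in D0) (Num.max (x - a) 0 * expR (- x))%:E = (expR (- a))%:E)%E.
Proof.
move=> a0; have := @integral_itvcy_affine_expRN a 0 1 (lexx 0) ler01.
rewrite add0r mul1r => <-.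
rewrite -[in RHS](@setIidr _ D0 `[a, +oo[%classic); last first.
  by move=> x /=; rewrite !in_itv /= !andbT; apply: le_trans.
rewrite integral_mkcondr; apply: eq_integral => x _; rewrite /patch.
case: ifPn => [|/negP]; rewrite inE /= in_itv /= andbT => ax.
  by rewrite add0r mul1r max_l // subr_ge0.
by rewrite max_r ?mul0r // subr_le0 ltW // ltNge; apply/negP.
Qed.

Lemma integral_id_expRN : (\int[mu]_(x in D0) (x * expR (- x))%:E = 1%:E)%E.
Proof.
have := integral_ramp_expRN (lexx 0); rewrite oppr0 expR0 => <-.
by apply: eq_integral => x; rewrite inE /= in_itv /= andbT => x0; rewrite addr0 max_l.
Qed.

Lemma measurable_expRN : measurable_fun D0 (fun x : R => expR (- x)).
Proof. by apply: measurable_funTS; apply: measurableT_comp => //; exact: measurable_expR. Qed.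

Let integrable_ge0 (f : R -> R) (r : R) : measurable_fun D0 f ->
  (forall x, D0 x -> 0 <= f x) -> (\int[mu]_(x in D0) (f x)%:E = r%:E)%E ->
  mu.-integrable D0 (EFin \o f).
Proof.
move=> mf f0 intf; apply/integrableP; split; first exact/measurable_EFinP.
suff -> : (\int[mu]_(x in D0) `|(EFin \o f) x| = r%:E)%E by rewrite ltry.
by rewrite -intf; apply: eq_integral => x /set_mem D0x; rewrite /= ger0_norm ?f0.
Qed.

Lemma integral_expRN_affine_ramp (a c0 c1 c2 : R) : 0 <= a ->
  (\int[mu]_(x in D0) ((c0 + c1 * x + c2 * Num.max (x - a) 0) * expR (- x))%:E
     = (c0 + c1 + c2 * expR (- a))%:E)%E.
Proof.
move=> a0.
have mD0 : measurable D0 by exact: measurable_itv.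
have D0_ge0 x : D0 x -> 0 <= x by rewrite /D0 /= in_itv /= andbT.
have i0 := integrable_ge0 measurable_expRN (fun x _ => expR_ge0 (- x)) integral_expRN.
have i1 : mu.-integrable D0 (EFin \o (fun x => x * expR (- x))).
  apply: integrable_ge0 integral_id_expRN.
  - by apply: measurable_funM => //; exact: measurable_expRN.
  - by move=> x /D0_ge0 x0; rewrite mulr_ge0 ?expR_ge0.
have i2 : mu.-integrable D0 (EFin \o (fun x => Num.max (x - a) 0 * expR (- x))).
  apply: integrable_ge0 (integral_ramp_expRN a0).
  - apply: measurable_funM; last exact: measurable_expRN.
    by apply: measurable_maxr => //; apply: measurable_funB.
  - by move=> x _; rewrite mulr_ge0 ?expR_ge0 // le_max lexx orbT.
transitivity (\int[mu]_(x in D0) ((c0%:E * (EFin \o (fun y : R => expR (- y)%R)) x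
   + c1%:E * (EFin \o (fun y : R => (y * expR (- y))%R)) x)
   + c2%:E * (EFin \o (fun y : R => (Num.max (y - a) 0 * expR (- y))%R)) x)%E)%E.
  by apply: eq_integral => x _; rewrite /= -!EFinM -!EFinD; congr EFin; ring.
rewrite integralD //; last 2 first.
- by apply: integrableD => //; exact: integrableZl.
- exact: integrableZl.
rewrite integralD //; try exact: integrableZl.
rewrite !integralZl // integral_expRN integral_id_expRN integral_ramp_expRN //.
by rewrite !mule1 -EFinM -!EFinD.
Qed.

End ExpIntegrals.

Section ExpectedPotential.
Variables (R : realType) (n i : nat) (sigma : 'I_n -> R).
Hypotheses (i_gt0 : (0 < i)%N) (i_lt_n : (i < n)%N).
Hypotheses (sigma_ge0 : forall j, 0 <= sigma j) (sigma_sum1 : \sum_(j < n) sigma j = 1).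
Hypothesis sigma_le_i : sigma_le sigma i <= i%:R / n%:R.

Variables (ps : R -> R) (F : seq R -> \bar R).
Hypotheses (ps_cvx : nondecreasing_convex ps) (ps0_ge0 : 0 <= ps 0).
Hypothesis F_ge : forall u, size u = n -> sorted <=%R u -> ((ps (potential n i u))%:E <= F u)%E.

Variable t : seq R.
Hypotheses (t_size : size t = n) (t_sorted : sorted <=%R t).

Let v := potential n i t.
Let mean_gain (j : nat) := gain_slope n i j + gain_ramp n i j * expR (- (n%:R * v)).

Lemma integral_jump_ge (j : 'I_n) (a g : R) :
  (forall y, ps a + g * (y - a) <= ps y) -> 0 <= g ->
  ((ps a + g * (v + mean_gain j - a))%:E <=
    \int[lebesgue_measure]_(x in `[0%R, +oo[) ((expR (- x))%:E * F (jump t j x)))%E.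
Proof.
move=> supp g_ge0.
have v_ge0 : 0 <= v := potential_ge0 i_gt0 i_lt_n t_size t_sorted.
have nv_ge0 : 0 <= n%:R * v by rewrite mulr_ge0.
have -> : ps a + g * (v + mean_gain j - a)
    = ps a + g * (v - a) + g * gain_slope n i j + g * gain_ramp n i j * expR (- (n%:R * v)).
  by rewrite /mean_gain; ring.
have jump_size (x : R) : size (jump t j x) = n by rewrite size_jump t_size.
have ps_jump (x : R) : ((ps (potential n i (jump t j x)))%:E <= F (jump t j x))%E.
  by apply: F_ge; [exact: jump_size | exact: sorted_jump].
have F_jump_ge0 (x : R) : (0 <= F (jump t j x))%E.
  apply: le_trans (ps_jump x); rewrite lee_fin.
  apply: le_trans ps0_ge0 (nondecreasing_convex_le ps_cvx _).
  by apply: potential_ge0 => //; apply: sorted_jump.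
have lower (x : R) : ((ps a + g * (v - a) + g * gain_slope n i j * x
    + g * gain_ramp n i j * Num.max (x - n%:R * v) 0)%:E <= F (jump t j x))%E.
  apply: le_trans (ps_jump x); rewrite lee_fin.
  apply: le_trans (supp (potential n i (jump t j x))).
  have gain := potential_jump_ge i_gt0 i_lt_n t_size t_sorted x (ltn_ord j).
  have := ler_wpM2l g_ge0 (lerB gain (lexx a)); rewrite -/v; lra.
rewrite -integral_expRN_affine_ramp //; apply: le_integral_EFin => x _.
  by rewrite mule_ge0 ?lee_fin ?expR_ge0.
by rewrite mulrC EFinM lee_wpmul2l ?lee_fin ?expR_ge0.
Qed.

Lemma ejump_op_ge : ((ps (drift_map n v))%:E <= ejump_op sigma F t)%E.
Proof.
have v_ge0 : 0 <= v := potential_ge0 i_gt0 i_lt_n t_size t_sorted.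
pose a := v + \sum_(j < n) sigma j * mean_gain j.
(* Jensen's inequality, through the supporting line of ps at the lower bound a
   on the expected next potential. *)
have [g g_ge0 supp] := ps_cvx a.
have drift_le : drift_map n v <= a.
  rewrite drift_mapE ?(ltn_trans i_gt0) // lerD2l; apply: mean_gain_ge => //.
  by rewrite expR_ge0 expR_le1 oppr_le0 mulr_ge0.
apply: le_trans (_ : (ps a)%:E <= _)%E; first by rewrite lee_fin; exact: nondecreasing_convex_le.
have -> : ps a = \sum_(j < n) sigma j * (ps a + g * (v + mean_gain j - a)).
  have -> : \sum_(j < n) sigma j * (ps a + g * (v + mean_gain j - a))
      = (ps a + g * (v - a)) * \sum_(j < n) sigma j + g * \sum_(j < n) sigma j * mean_gain j.
    rewrite mulr_sumr mulr_sumr -big_split; apply: eq_bigr => j _ /=; ring.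
  by rewrite sigma_sum1 /a; ring.
rewrite /ejump_op -sumEFin; apply: lee_sum => j _.
by rewrite EFinM lee_wpmul2l ?lee_fin // integral_jump_ge.
Qed.

End ExpectedPotential.

Lemma expected_gap_ge (R : realType) (n i : nat) (sigma : 'I_n -> R) :
  (0 < i)%N -> (i < n)%N -> (forall j, 0 <= sigma j) -> \sum_(j < n) sigma j = 1 ->
  sigma_le sigma i <= i%:R / n%:R ->
  forall s u, size u = n -> sorted <=%R u ->
  ((iter s (drift_map n) (potential n i u))%:E <= iter s (ejump_op sigma) (gap n) u)%E.
Proof.
move=> i_gt0 i_lt_n sigma_ge0 sigma_sum1 sigma_le_i.
elim=> [|s IHs] u u_size u_sorted; first by rewrite lee_fin potential_le_gap.
rewrite iterSr; apply: ejump_op_ge => //.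
- exact/nondecreasing_convex_iter/nondecreasing_convex_drift_map/(ltn_trans i_gt0).
- by apply: iter_ge; exact: drift_map_ge.
Qed.

Unset Implicit Arguments.

Theorem lemma12 (R : realType) (n : nat) (sigma : 'I_n -> R)
  (sigma_ge0 : forall j, 0 <= sigma j)
  (sigma_sum1 : \sum_(j < n) sigma j = 1)
  (hsig : exists i : nat, [/\ (1 <= i)%N, (i <= n.-1)%N &
                            sigma_le sigma i <= i%:R / n%:R])
  (t0 : seq R) (ht0size : size t0 = n) (ht0sorted : sorted <%R t0) :
  expected_gap sigma t0 s @[s --> \oo] --> +oo%E.
Proof.
have [i [i_gt0 i_le sigma_le_i]] := hsig.
have i_lt_n : (i < n)%N by lia.
have t0_sorted : sorted <=%R t0 by apply: sub_sorted ht0sorted => x y /ltW.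
have t0_pot := potential_ge0 i_gt0 i_lt_n ht0size t0_sorted.
have drift_cvgy : (iter s (drift_map n) (potential n i t0))%:E @[s --> \oo] --> +oo%E.
  by apply/cvgeryP; apply: iter_drift_map_cvgry t0_pot; exact: ltn_trans i_lt_n.
apply: gee_cvgy drift_cvgy; apply: filterE => s.
exact: expected_gap_ge.
Qed.
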